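(* In the setting described in the context, if $(x_1,L_1),(x_2,L_2)\in\mathcal E_\varphi$ with $x_1\neq x_2$, then $L_1$ and $L_2$ are transverse.
   Context: $V$ real symplectic of dimension $2n$, $\mathcal L(V)$ its Lagrangian Grassmannian, $\Gamma<\mathrm{PU}(1,1)$ a torsion-free cocompact lattice acting on $\mathbb S^1=\partial\mathcal D_{1,1}$, $\rho:\Gamma\to\mathrm{Sp}(V)$ a homomorphism, and $\varphi:\mathbb S^1\to\mathcal L(V)$ a $\rho$-equivariant measurable map such that (i) $\beta_n(\varphi(x),\varphi(y),\varphi(z))=n\beta_1(x,y,z)$ for Lebesgue-a.e. $(x,y,z)$, and (ii) for every $L\in\mathcal L(V)$ the set of $x$ with $\varphi(x)\cap L\neq0$ has Lebesgue measure zero. Here $\beta_n(L_1,L_2,L_3)$ is the signature of $(x_1,x_2,x_3)\mapsto\langle x_1,x_2\rangle+\langle x_2,x_3\rangle+\langle x_3,x_1\rangle$ on $L_1\oplus L_2\oplus L_3$, and $\beta_1(x,y,z)=\pm1$ for pairwise distinct positively/negatively cyclically ordered triples in $\mathbb S^1$, $0$ otherwise. The essential graph $\mathcal E_\varphi\subset\mathbb S^1\times\mathcal L(V)$ is the support of the pushforward of Lebesgue measure under $x\mapsto(x,\varphi(x))$. *)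

From HB Require Import structures.
From mathcomp Require Import all_boot all_order all_algebra.
From mathcomp Require Import all_classical all_reals all_analysis.
From mathcomp Require Import complex.
Set Implicit Arguments. Unset Strict Implicit. Unset Printing Implicit Defensive.
Import Order.TTheory GRing.Theory Num.Theory.
Import numFieldNormedType.Exports.
Local Open Scope classical_set_scope.
Local Open Scope ring_scope.

Section Defs.
Variable R : realType.

Local Notation C := (complex R).

Definition conjc (z : C) : C := Complex (complex.Re z) (- complex.Im z).
Definition cnorm2 (z : C) : R := complex.Re z ^+ 2 + complex.Im z ^+ 2.

Definition circ (t : R) : C := Complex (cos t) (sin t).
Definition circ2 (t : R) : R * R := (cos t, sin t).
Definition coord (z : C) : R * R := (complex.Re z, complex.Im z).

(* Orientation cocycle beta_1 on S^1: +1 on positively (counterclockwise)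
   cyclically ordered pairwise distinct triples, -1 on negatively ordered
   ones, 0 otherwise.  For points of the circle this is the sign of the
   oriented area of the triangle (x,y,z). *)
Definition beta1 (x y z : C) : int :=
  sgz ((complex.Re y - complex.Re x) * (complex.Im z - complex.Im x)
     - (complex.Im y - complex.Im x) * (complex.Re z - complex.Re x)).

(* SU(1,1) = { [[a, b], [conj b, conj a]] : |a|^2 - |b|^2 = 1 },
   represented by the pair (a, b); PU(1,1) = SU(1,1) / {+-1}.          *)
Definition su11 (g : C * C) : Prop := cnorm2 g.1 - cnorm2 g.2 = 1.
Definition su_one : C * C := (1, 0).
Definition su_neg (g : C * C) : C * C := (- g.1, - g.2).
Definition su_mul (g h : C * C) : C * C :=
  (g.1 * h.1 + g.2 * conjc h.2, g.1 * h.2 + g.2 * conjc h.1).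
Definition su_inv (g : C * C) : C * C := (conjc g.1, - g.2).
Definition su_pow (g : C * C) (k : nat) : C * C := iter k (su_mul g) su_one.
Definition pu_eq (g h : C * C) : Prop := g = h \/ g = su_neg h.
Definition su_act (g : C * C) (z : C) : C :=
  (g.1 * z + g.2) / (conjc g.2 * z + conjc g.1).

(* G is the (full) preimage in SU(1,1) of a subgroup Gamma < PU(1,1) *)
Definition pu_subgroup (G : set (C * C)) : Prop :=
  [/\ G `<=` su11, G su_one,
      (forall g h, G g -> G h -> G (su_mul g h)),
      (forall g, G g -> G (su_inv g)) &
      (forall g, G g -> G (su_neg g))].

Definition pu_discrete (G : set (C * C)) : Prop :=
  exists2 e : R, 0 < e & forall g, G g ->
    cnorm2 (g.1 - 1) < e -> cnorm2 g.2 < e -> pu_eq g su_one.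

(* cocompact: there is a compact K = {k in SU(1,1) | |k_11|^2 <= M}
   of SU(1,1) with Gamma K = SU(1,1) *)
Definition pu_cocompact (G : set (C * C)) : Prop :=
  exists M : R, forall g, su11 g ->
    exists2 gam, G gam & cnorm2 (su_mul (su_inv gam) g).1 <= M.

Definition pu_torsion_free (G : set (C * C)) : Prop :=
  forall g, G g -> forall k : nat, (0 < k)%N ->
    pu_eq (su_pow g k) su_one -> pu_eq g su_one.

Definition tf_cocompact_lattice (G : set (C * C)) : Prop :=
  [/\ pu_subgroup G, pu_discrete G, pu_cocompact G & pu_torsion_free G].

Definition Jmx (n : nat) : 'M[R]_(n + n) := block_mx 0 1%:M (- 1%:M) 0.
Definition omega (n : nat) (x y : 'rV[R]_(n + n)) : R := (x *m Jmx n *m y^T) 0 0.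

(* Sp(V); g acts on row vectors by v |-> v *m g^T, on subspaces by L |-> L *m g^T *)
Definition symplectic (n : nat) (g : 'M[R]_(n + n)) : Prop :=
  g^T *m Jmx n *m g = Jmx n.

(* The Lagrangian Grassmannian L(V): a Lagrangian L is represented by the
   orthogonal projection onto it (so L(V) carries the usual topology of
   the Grassmannian, induced from the matrix space); the subspace L itself
   is the row space of the matrix. *)
Definition lagrangian (n : nat) (P : 'M[R]_(n + n)) : Prop :=
  [/\ P^T = P, P *m P = P, \rank P = n & P *m Jmx n *m P^T = 0].

Definition transverse (n : nat) (P Q : 'M[R]_(n + n)) : Prop :=
  \rank (P :&: Q)%MS = 0%N.

(* Maslov form on L1 (+) L2 (+) L3 (external direct sum inside V^3) *)
Definition maslov_form (n : nat) (x1 x2 x3 : 'rV[R]_(n + n)) : R :=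
  omega x1 x2 + omega x2 x3 + omega x3 x1.

Definition definite_subspace (n : nat) (s : R) (L1 L2 L3 : 'M[R]_(n + n))
    (k : nat) : Prop :=
  exists (a1 a2 a3 : 'I_k -> 'rV[R]_(n + n)),
    (forall i, (a1 i <= L1)%MS /\ (a2 i <= L2)%MS /\ (a3 i <= L3)%MS) /\
    forall c : 'I_k -> R, (exists i, c i != 0) ->
      0 < s * maslov_form (\sum_i c i *: a1 i) (\sum_i c i *: a2 i)
                          (\sum_i c i *: a3 i).

Definition inertia_index (n : nat) (s : R) (L1 L2 L3 : 'M[R]_(n + n)) : nat :=
  \max_(k < (3 * (n + n)).+1 | `[< definite_subspace s L1 L2 L3 k >]) k.

Definition beta_n (n : nat) (L1 L2 L3 : 'M[R]_(n + n)) : int :=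
  (inertia_index 1 L1 L2 L3)%:Z - (inertia_index (-1) L1 L2 L3)%:Z.

(* Measure theory on S^1: S^1 is parametrized by t |-> circ t; a set of
   S^1 is Lebesgue-null iff its preimage in R is. *)
Definition leb_measurable (A : set R) : Prop :=
  exists B : set R, measurable B /\
    (@lebesgue_measure R).-negligible ((A `\` B) `|` (B `\` A)).

Definition circ_measurable (n : nat) (phi : C -> 'M[R]_(n + n)) : Prop :=
  forall O : set 'M[R]_(n + n), open O ->
    leb_measurable [set t | O (phi (circ t))].

(* essential graph: support of the pushforward of Lebesgue measure on S^1
   under x |-> (x, phi x), S^1 x L(V) being topologized inside R^2 x M_2n *)
Definition ess_graph (n : nat) (phi : C -> 'M[R]_(n + n))
    (x : C) (L : 'M[R]_(n + n)) : Prop :=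
  forall N : set ((R * R) * 'M[R]_(n + n)), nbhs (coord x, L) N ->
    (0 < (@lebesgue_measure R) [set t | N (circ2 t, phi (circ t))])%E.

End Defs.

(* Separate x1 from x2 by a chord of the circle whose endpoints a, b are generic: then
   A = phi(b) and C = phi(a) are transverse Lagrangians, both transverse to L1, and for almost
   every t the identity beta_n(C, A, phi t) = n beta_1(a, b, t) = +-n holds, the sign being the
   side of the chord on which t lies.  Writing u = u_A + u_C, the quadratic form
   q(u) = omega(u_A, u_C) is nonnegative on every Lagrangian L with beta_n(C, A, L) = n and
   nonpositive when beta_n(C, A, L) = -n: a vector of the wrong sign would produce a definite
   subspace of dimension n + 1 for the Maslov form, leaving at most 2n - 1 dimensions for the
   other sign.  These closed conditions pass to the essential graph, so q >= 0 on L1 and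
   q <= 0 on L2.  Transversality of L1 to A and C makes q nondegenerate on L1, so a
   semidefinite q is definite there and L1 meets L2 only in 0. *)

From Pilot Require Import Defs.
From HB Require Import structures.
From mathcomp Require Import all_boot all_order all_algebra.
From mathcomp Require Import all_classical all_reals all_analysis.
From mathcomp Require Import complex.
From mathcomp Require Import ring lra zify.
Import Order.TTheory GRing.Theory Num.Theory.
Import numFieldNormedType.Exports.
Local Open Scope classical_set_scope.
Local Open Scope ring_scope.
Set Implicit Arguments. Unset Strict Implicit. Unset Printing Implicit Defensive.

(** * Symplectic linear algebra *)

Section Symplectic.
Variables (R : realType) (n : nat).
Local Notation V := 'rV[R]_(n + n).
Local Notation M := 'M[R]_(n + n).
Local Notation J := (@Jmx R n).
Implicit Types (u v w x y z : V) (A C L P Q : M).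

Lemma trJmx : J^T = - J.
Proof.
by rewrite /Jmx tr_block_mx !trmx0 trmx1 raddfN /= trmx1 opp_block_mx !oppr0 opprK.
Qed.

Lemma mulJmxJmx : J *m J = - 1%:M.
Proof.
rewrite /Jmx mulmx_block !mulmx0 !mul0mx !mulmx1 !mul1mx !addr0 !add0r.
have scalarN1 k : - (1%:M : 'M[R]_k) = (-1)%:M by rewrite raddfN.
by rewrite !scalarN1 -scalar_mx_block.
Qed.

Lemma omega_antisym x y : omega x y = - omega y x.
Proof.
have trE : (y *m J *m x^T)^T = - (x *m J *m y^T).
  by rewrite !trmx_mul trmxK trJmx mulNmx mulmxN mulmxA.
rewrite /omega; have -> : (y *m J *m x^T) 0 0 = (y *m J *m x^T)^T 0 0 by rewrite [RHS]mxE.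
by rewrite trE [in RHS]mxE opprK.
Qed.

Lemma omegaxx x : omega x x = 0.
Proof.
have /eqP := omega_antisym x x; rewrite -addr_eq0 -mulr2n -mulr_natr mulf_eq0.
by rewrite pnatr_eq0 orbF => /eqP.
Qed.

Lemma omegaDl x y z : omega (x + y) z = omega x z + omega y z.
Proof. by rewrite /omega !mulmxDl mxE. Qed.

Lemma omegaDr x y z : omega x (y + z) = omega x y + omega x z.
Proof. by rewrite /omega linearD /= mulmxDr mxE. Qed.

Lemma omegaZl a x z : omega (a *: x) z = a * omega x z.
Proof. by rewrite /omega -!scalemxAl mxE. Qed.

Lemma omegaZr a x z : omega x (a *: z) = a * omega x z.
Proof. by rewrite /omega linearZ /= -scalemxAr mxE. Qed.

Lemma omegaNl x z : omega (- x) z = - omega x z.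
Proof. by rewrite -scaleN1r omegaZl mulN1r. Qed.

Lemma omegaNr x z : omega x (- z) = - omega x z.
Proof. by rewrite -scaleN1r omegaZr mulN1r. Qed.

Lemma omegaBl x y z : omega (x - y) z = omega x z - omega y z.
Proof. by rewrite omegaDl omegaNl. Qed.

Lemma omega0l z : omega 0 z = 0.
Proof. by rewrite -(scale0r 0) omegaZl mul0r. Qed.

Lemma omega_nondegenerate x : (forall v, omega x v = 0) -> x = 0.
Proof.
move=> x_orth; have xJ : x *m J = 0.
  apply/rowP => j; have := x_orth (delta_mx 0 j).
  by rewrite /omega trmx_delta -colE !mxE.
have : x *m J *m J = - x by rewrite -mulmxA mulJmxJmx mulmxN mulmx1.
by rewrite xJ mul0mx => /eqP; rewrite eq_sym oppr_eq0 => /eqP.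
Qed.

Lemma lagrangian_rank P : lagrangian P -> \rank P = n.
Proof. by case. Qed.

Lemma lagrangian_isotropic P u v : lagrangian P ->
  (u <= P)%MS -> (v <= P)%MS -> omega u v = 0.
Proof.
case=> _ _ _ PJP /submxP[a ->] /submxP[b ->].
by rewrite /omega trmx_mul !mulmxA -(mulmxA a) -(mulmxA _ _ P^T) PJP mulmx0 mul0mx mxE.
Qed.

Lemma transverse_sym P Q : transverse P Q -> transverse Q P.
Proof. by rewrite /transverse capmxC. Qed.

Lemma transverse_capmx0 P Q : transverse P Q -> (P :&: Q = 0)%MS.
Proof. by move=> tPQ; apply/eqP; rewrite -mxrank_eq0; apply/eqP. Qed.

Lemma transverse_submx0 P Q v : transverse P Q ->
  (v <= P)%MS -> (v <= Q)%MS -> v = 0.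
Proof.
move=> /transverse_capmx0 PQ0 vP vQ; apply/eqP.
by rewrite -submx0 -PQ0 sub_capmx vP vQ.
Qed.

Lemma transverse_sub_addsmx P Q v : lagrangian P -> lagrangian Q ->
  transverse P Q -> (v <= P + Q)%MS.
Proof.
move=> lP lQ tPQ; apply: submx_full; rewrite /row_full.
have := mxrank_sum_cap P Q.
by rewrite (lagrangian_rank lP) (lagrangian_rank lQ) tPQ addn0 => ->.
Qed.

End Symplectic.

Lemma mulmx_trmx_gt0 (R : realType) k (a : 'rV[R]_k) :
  a != 0 -> 0 < (a *m a^T) 0 0.
Proof.
have sqE : (a *m a^T) 0 0 = \sum_i a 0 i ^+ 2.
  by rewrite mxE; apply: eq_bigr => i _; rewrite mxE expr2.
move=> a0; rewrite sqE lt0r sumr_ge0 ?andbT => [|i _]; last exact: sqr_ge0.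
apply: contra a0; rewrite psumr_eq0 => [/allP a0|i _]; last exact: sqr_ge0.
apply/eqP/rowP => j; rewrite mxE; apply/eqP; rewrite -sqrf_eq0.
exact: a0 (mem_index_enum j).
Qed.

Lemma col_mx_dependent (R : fieldType) k k' m (T : 'M[R]_(k, m)) (N : 'M[R]_(k', m)) :
  (\rank (col_mx T N) < k + k')%N ->
  exists (x : 'rV_k) (z : 'rV_k'), ((x != 0) || (z != 0)) /\ x *m T = - (z *m N).
Proof.
move=> rk_lt; have /rowV0Pn[X XK X0] : kermx (col_mx T N) != 0.
  by rewrite -mxrank_eq0 mxrank_ker subn_eq0 -ltnNge.
exists (lsubmx X), (rsubmx X); split.
  apply: contraNT X0; rewrite negb_or => /andP[/negPn/eqP l0 /negPn/eqP r0].
  by rewrite -[X]hsubmxK l0 r0 row_mx0.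
apply/eqP; rewrite -addr_eq0 -mul_row_col hsubmxK; apply/eqP.
by apply/sub_kermxP.
Qed.

(** * Inertia of the Maslov form *)

Section Maslov.
Variables (R : realType) (n : nat).
Local Notation V := 'rV[R]_(n + n).
Local Notation M := 'M[R]_(n + n).
Local Notation J := (@Jmx R n).
Implicit Types (u v w x y z : V) (A C L P : M).

(* For transverse Lagrangians A and C, write u = u_A + u_C; then polar A C u v = omega u_A v_C. *)
Definition polar A C u v := omega (u *m proj_mx A C) (v *m proj_mx C A).
Definition qform A C w := polar A C w w.

Lemma maslov_form_split a c alpha gamma w t :
  w = alpha + gamma -> omega a alpha = 0 -> omega gamma c = 0 ->
  maslov_form (c + t *: gamma) (a + t *: alpha) (t *: w)
  = omega c a + t ^+ 2 * omega alpha gamma.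
Proof.
move=> -> a_alpha gamma_c; rewrite /maslov_form.
rewrite !(omegaDl, omegaDr, omegaZl, omegaZr) a_alpha gamma_c !omegaxx.
by rewrite (omega_antisym alpha c) (omega_antisym gamma a) (omega_antisym gamma alpha); ring.
Qed.

(* The witness is spanned by the triples (- s (b J)_C, b, 0), for b in a basis of A, and
   (w_C, w_A, w); at a combination with A-part a and last coefficient t the Maslov form
   equals s |a|^2 + t^2 qform A C w. *)
Lemma qform_definite_subspace A C L s w : s * s = 1 ->
  lagrangian A -> lagrangian C -> transverse A C ->
  (w <= L)%MS -> 0 < s * qform A C w ->
  definite_subspace s C A L (\rank A + 1).
Proof.
move=> ss lA lC tAC wL qw_pos.
set B := row_base A; set PC := proj_mx C A.
set CB := ((- s) *: (B *m J)) *m PC.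
set alpha := w *m proj_mx A C; set gamma := w *m PC.
have w_split : w = alpha + gamma.
  by rewrite add_proj_mx ?transverse_sub_addsmx ?transverse_capmx0.
have alphaA : (alpha <= A)%MS by exact: proj_mx_sub.
have gammaC : (gamma <= C)%MS by exact: proj_mx_sub.
have BA : (B <= A)%MS by rewrite eq_row_base.
have CBC : (CB <= C)%MS by exact: proj_mx_sub.
pose M1 := col_mx CB gamma; pose M2 := col_mx B alpha.
pose M3 := col_mx (0 : 'M[R]_(\rank A, n + n)) w.
exists (fun i => row i M1), (fun i => row i M2), (fun i => row i M3); split.
  move=> i; split; [|split]; apply: submx_trans (row_sub _ _) _;
    by rewrite col_mx_sub ?CBC ?gammaC ?BA ?alphaA ?sub0mx.
move=> c [i ci]; set X := \row_i c i.
have sumE (Mx : 'M[R]_(\rank A + 1, n + n)) : \sum_i c i *: row i Mx = X *m Mx.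
  by rewrite mulmx_sum_row; apply: eq_bigr => j _; rewrite mxE.
rewrite !sumE -(hsubmxK X) !mul_row_col mulmx0 add0r.
set x := lsubmx X; set y := rsubmx X.
have yE v : y *m v = y 0 0 *: v by rewrite {1}(mx11_scalar y) mul_scalar_mx.
rewrite !yE; set a := x *m B; set t := y 0 0.
rewrite (@maslov_form_split a _ alpha gamma w t w_split); first last.
- by apply: (lagrangian_isotropic lC gammaC); exact: submx_trans (submxMl _ _) CBC.
- by apply: (lagrangian_isotropic lA _ alphaA); exact: submx_trans (submxMl _ _) BA.
have xB_C : omega (x *m CB) a = s * (a *m a^T) 0 0.
  set W := x *m ((- s) *: (B *m J)).
  have WA : (W - x *m CB <= A)%MS.
    rewrite /CB mulmxA; apply/proj_mx_compl_sub/transverse_sub_addsmx => //.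
    exact: transverse_sym.
  rewrite -[x *m CB](subKr W) omegaBl (lagrangian_isotropic lA WA); last first.
    exact: submx_trans (submxMl _ _) BA.
  rewrite subr0 /W -scalemxAr omegaZl /omega mulmxA -/a -(mulmxA a J J) mulJmxJmx.
  by rewrite mulmxN mulmx1 mulNmx mxE mulrN mulNr opprK.
rewrite xB_C mulrDr mulrA ss mul1r mulrCA -/(polar A C w w) -/(qform A C w).
have [x0|xn0] := eqVneq x 0.
- have t0 : t != 0.
    apply: contra_neq ci => t0; have : X = 0.
      by rewrite -(hsubmxK X) -/x -/y x0 (mx11_scalar y) -/t t0 raddf0 row_mx0.
    by move/(congr1 (fun Y : 'rV_(\rank A + 1) => Y 0 i)); rewrite !mxE.
  rewrite /a x0 mul0mx mul0mx mxE add0r.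
  by apply: mulr_gt0 => //; rewrite exprn_even_gt0.
- have a0 : a != 0 by rewrite /a mulmx_free_eq0 ?row_base_free.
  apply: ltr_pwDl; first exact: mulmx_trmx_gt0.
  by apply: mulr_ge0; [rewrite sqr_ge0|exact: ltW].
Qed.

Lemma maslov_formN x y z : maslov_form (- x) (- y) (- z) = maslov_form x y z.
Proof. by rewrite /maslov_form !(omegaNl, omegaNr) !opprK. Qed.

Definition fammx k (a : 'I_k -> V) : 'M[R]_(k, n + n) := \matrix_(i, j) a i 0 j.

Lemma fammxE k (a : 'I_k -> V) (c : 'I_k -> R) :
  \sum_i c i *: a i = (\row_i c i) *m fammx a.
Proof.
rewrite mulmx_sum_row; apply: eq_bigr => i _; rewrite mxE; congr (_ *: _).
by apply/rowP => j; rewrite !mxE.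
Qed.

Lemma fammx_sub k (a : 'I_k -> V) P :
  (forall i, (a i <= P)%MS) -> (fammx a <= P)%MS.
Proof.
move=> aP; apply/row_subP => i.
by have -> : row i (fammx a) = a i by apply/rowP => j; rewrite !mxE.
Qed.

Definition triplemx k (a1 a2 a3 : 'I_k -> V) :=
  row_mx (row_mx (fammx a1) (fammx a2)) (fammx a3).

Lemma definite_maslov_form s k (a1 a2 a3 : 'I_k -> V) (x : 'rV_k) :
  (forall c : 'I_k -> R, (exists i, c i != 0) ->
     0 < s * maslov_form (\sum_i c i *: a1 i) (\sum_i c i *: a2 i) (\sum_i c i *: a3 i)) ->
  x != 0 -> 0 < s * maslov_form (x *m fammx a1) (x *m fammx a2) (x *m fammx a3).
Proof.
move=> a_def x0; have [i xi] : exists i, x 0 i != 0.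
  apply/existsP; apply: contraR x0 => /existsPn xi.
  by apply/eqP/rowP => i; rewrite mxE; apply/eqP/negPn.
have rowx : x = \row_j x 0 j by apply/rowP => j; rewrite mxE.
by have := a_def (fun j => x 0 j) (ex_intro _ i xi); rewrite !fammxE -!rowx.
Qed.

(* Definite subspaces of opposite signs meet trivially inside L1 (+) L2 (+) L3. *)
Lemma definite_subspace_dim s L1 L2 L3 k k' :
  definite_subspace s L1 L2 L3 k -> definite_subspace (- s) L1 L2 L3 k' ->
  (k + k' <= \rank L1 + \rank L2 + \rank L3)%N.
Proof.
move=> [a1 [a2 [a3 [aL a_def]]]] [b1 [b2 [b3 [bL b_def]]]].
set S := block_mx (block_mx L1 0 0 L2) 0 0 L3.
have triple_sub k0 (c1 c2 c3 : 'I_k0 -> V) :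
    (forall i, (c1 i <= L1)%MS /\ (c2 i <= L2)%MS /\ (c3 i <= L3)%MS) ->
    (triplemx c1 c2 c3 <= S)%MS.
  move=> cL; rewrite /triplemx.
  have /submxP[D1 ->] : (fammx c1 <= L1)%MS by apply: fammx_sub => i; case: (cL i).
  have /submxP[D2 ->] : (fammx c2 <= L2)%MS by apply: fammx_sub => i; case: (cL i) => _ [].
  have /submxP[D3 ->] : (fammx c3 <= L3)%MS by apply: fammx_sub => i; case: (cL i) => _ [].
  apply/submxP; exists (row_mx (row_mx D1 D2) D3).
  by rewrite /S !mul_row_block !mulmx0 !addr0 !add0r.
rewrite -!rank_diag_block_mx -/S leqNgt; apply/negP => rk_lt.
have [|x [z [xz0 xz]]] := @col_mx_dependent _ _ _ _ (triplemx a1 a2 a3) (triplemx b1 b2 b3).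
  apply: leq_ltn_trans rk_lt; apply: mxrankS.
  by rewrite col_mx_sub !triple_sub.
move: xz; rewrite /triplemx !mul_mx_row !opp_row_mx.
move=> /eq_row_mx[/eq_row_mx[e1 e2] e3].
have opp_def :
    0 < - s * maslov_form (x *m fammx a1) (x *m fammx a2) (x *m fammx a3) \/ z = 0.
  have [->|z0] := eqVneq z 0; [by right|left].
  by rewrite e1 e2 e3 maslov_formN; exact: definite_maslov_form b_def z0.
have [x0|x0] := eqVneq x 0.
- move: xz0 opp_def; rewrite x0 eqxx /= => z0 [|/eqP]; last by rewrite (negPf z0).
  by rewrite !mul0mx /maslov_form !omega0l !addr0 mulr0 ltxx.
- have := definite_maslov_form a_def x0; case: opp_def => [|z0]; last first.
    by rewrite e1 e2 e3 z0 !mul0mx !oppr0 /maslov_form !omega0l !addr0 mulr0 ltxx.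
  by rewrite mulNr oppr_gt0 => /lt_trans/[apply]; rewrite ltxx.
Qed.

Lemma inertia_index_ge s L1 L2 L3 k : (k <= 3 * (n + n))%N ->
  definite_subspace s L1 L2 L3 k -> (k <= inertia_index s L1 L2 L3)%N.
Proof.
rewrite -ltnS => k_lt k_def; rewrite /inertia_index.
apply: (@leq_bigmax_cond _ _ (fun i : 'I_(3 * (n + n)).+1 => i) (Ordinal k_lt)).
exact/asboolP.
Qed.

Lemma inertia_index_le_compl s L1 L2 L3 k : definite_subspace (- s) L1 L2 L3 k ->
  (inertia_index s L1 L2 L3 <= \rank L1 + \rank L2 + \rank L3 - k)%N.
Proof.
move=> k_def; apply/bigmax_leqP => i /asboolP i_def.
by have := definite_subspace_dim i_def k_def; lia.
Qed.

Lemma qform_inertia_index A C L s w : (0 < n)%N -> s * s = 1 ->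
  lagrangian A -> lagrangian C -> lagrangian L -> transverse A C ->
  (w <= L)%MS -> 0 < s * qform A C w ->
  (n < inertia_index s C A L)%N /\ (inertia_index (- s) C A L < n.*2)%N.
Proof.
move=> n_gt0 ss lA lC lL tAC wL qw_def.
have := qform_definite_subspace ss lA lC tAC wL qw_def.
rewrite lagrangian_rank // => s_def.
split; first by rewrite -addn1 inertia_index_ge //; lia.
have := inertia_index_le_compl (s := - s); rewrite opprK => /(_ _ _ _ _ s_def).
by rewrite !lagrangian_rank //; lia.
Qed.

Lemma qform_ge0 A C L w : (0 < n)%N ->
  lagrangian A -> lagrangian C -> lagrangian L -> transverse A C ->
  beta_n C A L = n%:Z -> (w <= L)%MS -> 0 <= qform A C w.
Proof.
move=> n_gt0 lA lC lL tAC beta_n_max wL; rewrite leNgt; apply/negP => qw_neg.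
have [] := @qform_inertia_index A C L (-1) w n_gt0 _ lA lC lL tAC wL.
- by rewrite mulrNN mulr1.
- by rewrite mulN1r oppr_gt0.
move: beta_n_max; rewrite /beta_n opprK.
(* [set] identifies the two syntactically different instances of [1] in the indices,
   which [lia] would otherwise treat as unrelated atoms. *)
by set i1 := inertia_index 1 C A L; set i2 := inertia_index (-1) C A L; lia.
Qed.

Lemma qform_le0 A C L w : (0 < n)%N ->
  lagrangian A -> lagrangian C -> lagrangian L -> transverse A C ->
  beta_n C A L = - n%:Z -> (w <= L)%MS -> qform A C w <= 0.
Proof.
move=> n_gt0 lA lC lL tAC beta_n_min wL; rewrite leNgt; apply/negP => qw_pos.
have [] := @qform_inertia_index A C L 1 w n_gt0 (mulr1 1) lA lC lL tAC wL.
  by rewrite mul1r.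
move: beta_n_min; rewrite /beta_n.
by set i1 := inertia_index 1 C A L; set i2 := inertia_index (-1) C A L; lia.
Qed.

End Maslov.

(** * Semidefinite polar forms *)

Lemma quadratic_ge0_lin0 (R : realType) (b q : R) :
  0 <= q -> (forall t, 0 <= 2 * t * b + t ^+ 2 * q) -> b = 0.
Proof.
move=> q_ge0 quad_ge0; have q1_gt0 : 0 < q + 1 by rewrite ltr_wpDl.
have := quad_ge0 (- b / (q + 1)).
have -> : 2 * (- b / (q + 1)) * b + (- b / (q + 1)) ^+ 2 * q
          = - (b ^+ 2 * (q + 2)) / (q + 1) ^+ 2.
  by field; rewrite gt_eqF.
rewrite pmulr_lge0 ?invr_gt0 ?exprn_gt0 // oppr_ge0 pmulr_lle0 ?ltr_wpDl //.
by move=> b2_le0; apply/eqP; rewrite -sqrf_eq0 eq_le b2_le0 sqr_ge0.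
Qed.

Section PolarForm.
Variables (R : realType) (n : nat).
Local Notation V := 'rV[R]_(n + n).
Local Notation M := 'M[R]_(n + n).
Implicit Types (u v w : V) (A C L : M).

Lemma polar_sym A C L u v : lagrangian A -> lagrangian C -> lagrangian L ->
  transverse A C -> (u <= L)%MS -> (v <= L)%MS -> polar A C u v = polar A C v u.
Proof.
move=> lA lC lL tAC uL vL.
have split_AC (x : V) : x *m proj_mx A C + x *m proj_mx C A = x.
  by rewrite add_proj_mx ?transverse_capmx0 ?transverse_sub_addsmx.
have := lagrangian_isotropic lL uL vL.
rewrite -[in omega u v](split_AC u) -[in omega _ v](split_AC v).
rewrite !(omegaDl, omegaDr).
rewrite (lagrangian_isotropic lA (proj_mx_sub A C u) (proj_mx_sub A C v)).
rewrite (lagrangian_isotropic lC (proj_mx_sub C A u) (proj_mx_sub C A v)) add0r addr0.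
by rewrite (omega_antisym (u *m proj_mx C A)) => /eqP; rewrite subr_eq0 => /eqP.
Qed.

Lemma qform_addZ A C w u t : qform A C (w + t *: u) =
  qform A C w + t * (polar A C w u + polar A C u w) + t ^+ 2 * qform A C u.
Proof.
rewrite /qform /polar !mulmxDl -!scalemxAl !(omegaDl, omegaDr, omegaZl, omegaZr).
by ring.
Qed.

Lemma qform_ge0_polar0 A C L w u : lagrangian A -> lagrangian C -> lagrangian L ->
  transverse A C -> (forall v, (v <= L)%MS -> 0 <= qform A C v) ->
  (w <= L)%MS -> qform A C w = 0 -> (u <= L)%MS -> polar A C w u = 0.
Proof.
move=> lA lC lL tAC q_ge0 wL qw0 uL.
apply: (@quadratic_ge0_lin0 _ _ (qform A C u)); first exact: q_ge0.
move=> t; have := q_ge0 (w + t *: u); rewrite addmx_sub ?scalemx_sub // => /(_ isT).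
rewrite qform_addZ qw0 (polar_sym lA lC lL tAC uL wL) add0r.
by rewrite -mulr2n mulrnAr -mulrA mulr_natl.
Qed.

Lemma polar_nondegenerate A C L w : lagrangian A -> lagrangian C -> lagrangian L ->
  transverse A C -> transverse L A -> transverse L C ->
  (w <= L)%MS -> (forall u, (u <= L)%MS -> polar A C w u = 0) -> w = 0.
Proof.
move=> lA lC lL tAC tLA tLC wL w_orth.
have CA0 : (C :&: A = 0)%MS by rewrite capmxC transverse_capmx0.
have split_AC (x : V) : x *m proj_mx A C + x *m proj_mx C A = x.
  by rewrite add_proj_mx ?transverse_capmx0 ?transverse_sub_addsmx.
have wA0 : w *m proj_mx A C = 0.
  apply: omega_nondegenerate => v; rewrite -(split_AC v) omegaDr.
  rewrite (lagrangian_isotropic lA (proj_mx_sub A C w) (proj_mx_sub A C v)) add0r.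
  have /sub_addsmxP[[u1 u2] /= vC_split] : (v *m proj_mx C A <= L + A)%MS.
    exact: transverse_sub_addsmx.
  have <- : u1 *m L *m proj_mx C A = v *m proj_mx C A.
    rewrite -[u1 *m L](addrK (u2 *m A)) -vC_split mulmxBl (proj_mx_0 CA0 (submxMl u2 A)).
    by rewrite subr0 (proj_mx_id CA0 (proj_mx_sub C A v)).
  exact/w_orth/submxMl.
have wC : (w <= C)%MS by rewrite -(split_AC w) wA0 add0r proj_mx_sub.
exact: transverse_submx0 tLC wL wC.
Qed.

Lemma transverse_of_qform_signs A C L1 L2 :
  lagrangian A -> lagrangian C -> lagrangian L1 ->
  transverse A C -> transverse L1 A -> transverse L1 C ->
  (forall u, (u <= L1)%MS -> 0 <= qform A C u) ->
  (forall u, (u <= L2)%MS -> qform A C u <= 0) ->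
  transverse L1 L2.
Proof.
move=> lA lC lL1 tAC tL1A tL1C q_ge0 q_le0.
apply/eqP; rewrite mxrank_eq0; apply/rowV0P => v v_cap.
have vL1 := submx_trans v_cap (capmxSl _ _); have vL2 := submx_trans v_cap (capmxSr _ _).
apply: (polar_nondegenerate lA lC lL1 tAC tL1A tL1C vL1) => u uL1.
apply: (qform_ge0_polar0 lA lC lL1 tAC q_ge0 vL1 _ uL1).
by apply/eqP; rewrite eq_le q_le0 // q_ge0.
Qed.

End PolarForm.

(** * Essential graphs *)

Section MxContinuity.
Variables (R : realType) (T : topologicalType).

Definition mx_continuous p q (F : T -> 'M[R]_(p, q)) :=
  forall i j, continuous (fun x => F x i j).

Lemma mx_continuous_cst p q (A : 'M[R]_(p, q)) : mx_continuous (fun _ => A).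
Proof. by move=> i j; exact: cst_continuous. Qed.

Lemma mx_continuousD p q (F G : T -> 'M[R]_(p, q)) :
  mx_continuous F -> mx_continuous G -> mx_continuous (fun x => F x + G x).
Proof.
move=> cF cG i j; under [fun x => _]funext => x do rewrite mxE.
by move=> x; apply: cvgD; [exact: cF|exact: cG].
Qed.

Lemma mx_continuousN p q (F : T -> 'M[R]_(p, q)) :
  mx_continuous F -> mx_continuous (fun x => - F x).
Proof.
move=> cF i j; under [fun x => _]funext => x do rewrite mxE.
by move=> x; apply: cvgN; exact: cF.
Qed.

Lemma mx_continuousM p q r (F : T -> 'M[R]_(p, q)) (G : T -> 'M[R]_(q, r)) :
  mx_continuous F -> mx_continuous G -> mx_continuous (fun x => F x *m G x).
Proof.
move=> cF cG i j; under [fun x => _]funext => x do rewrite mxE.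
apply: continuous_big => [|k _ x]; first exact: add_continuous.
by apply: cvgM; [exact: cF|exact: cG].
Qed.

Lemma mx_continuous_tr p q (F : T -> 'M[R]_(p, q)) :
  mx_continuous F -> mx_continuous (fun x => (F x)^T).
Proof. by move=> cF i j; under [fun x => _]funext => x do rewrite mxE; exact: cF. Qed.

End MxContinuity.

Lemma mx_continuous_id (R : realType) p q : mx_continuous (fun P : 'M[R]_(p, q) => P).
Proof. by move=> i j; exact: coord_continuous. Qed.

Lemma mxtrace_idempotent (R : fieldType) m (P : 'M[R]_m) :
  P *m P = P -> \tr P = (\rank P)%:R.
Proof.
move=> PP; have P_base := mulmx_base P.
have /row_freeP[B' B'K] := row_base_free P.
have /row_fullP[C' C'K] := col_base_full P.
move: (col_base P) (row_base P) P_base B'K C'K => cb rb P_base B'K C'K.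
have base_inv : rb *m cb = 1%:M.
  have : C' *m (cb *m rb *m (cb *m rb)) *m B' = C' *m (cb *m rb) *m B' by rewrite P_base PP.
  by rewrite !mulmxA C'K mul1mx -!mulmxA B'K mulmx1.
by rewrite -[in LHS]P_base mxtrace_mulC base_inv mxtrace1.
Qed.

Lemma le_lebesgue_measure (R : realType) (A B : set R) : A `<=` B ->
  (@lebesgue_measure R A <= @lebesgue_measure R B)%E.
Proof.
move=> AB; rewrite /lebesgue_measure /lebesgue_stieltjes_measure /measure_extension.
exact: le_mu_ext.
Qed.

Lemma aeI d (T : ringOfSetsType d) (R : realFieldType) (mu : {measure set T -> \bar R})
    (P Q : T -> Prop) :
  {ae mu, forall x, P x} -> {ae mu, forall x, Q x} -> {ae mu, forall x, P x /\ Q x}.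
Proof. exact: (@filterI _ _ (ae_filter_ringOfSetsType mu)). Qed.

Lemma open_ae_witness (R : realType) (O : set R) (P : R -> Prop) t0 :
  open O -> O t0 -> {ae @lebesgue_measure R, forall t, P t} -> exists t, O t /\ P t.
Proof.
move=> oO Ot0 [N [mN N0 notPN]]; apply: contrapT => noOP.
have /nbhs_ballP[e /= e_gt0] := open_nbhs_nbhs (conj oO Ot0); rewrite ball_itv => ballO.
have ballN : `]t0 - e, t0 + e[%classic `<=` N.
  by move=> t /ballO Ot; apply: notPN => Pt; apply: noOP; exists t.
have := @subset_measure0 _ (measurableTypeR R) R (@lebesgue_measure R) _ _
  (measurable_itv _) mN ballN N0.
move/(etrans (esym (lebesgue_measure_itv `]t0 - e, t0 + e[))).
rewrite /= lte_fin ltrBlDr -addrA ltrDl addr_gt0 // -EFinD => -[]; lra.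
Qed.

Section ProductNull.
Context d1 d2 (T1 : measurableType d1) (T2 : measurableType d2) (R : realType).
Variables (m1 : {measure set T1 -> \bar R}) (m2 : {sigma_finite_measure set T2 -> \bar R}).

Lemma ae_prod_xsection (P : T1 * T2 -> Prop) :
  {ae (m1 \x m2)%E, forall z, P z} -> {ae m1, forall x, {ae m2, forall y, P (x, y)}}.
Proof.
move=> [N [mN N0 notPN]].
have : (\int[m1]_(x in setT) `|(m2 \o xsection N) x| = 0)%E.
  by rewrite -[RHS]N0 /product_measure1; apply: eq_integral => x _ /=; rewrite gee0_abs.
move/(ae_eq_integral_abs m1 measurableT (measurable_fun_xsection _ mN)).
move=> [S [mS S0 sectionS]]; exists S; split => // x /= notPx; apply: sectionS => /= Nx0.
apply: notPx; exists (xsection N x); split; first exact: measurable_xsection.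
  exact: Nx0.
by move=> y notPy; rewrite /xsection /=; apply/mem_set; exact: notPN.
Qed.

End ProductNull.

Lemma open_gt_comp (R : realType) (T : topologicalType) (f : T -> R) y :
  continuous f -> open [set x | y < f x].
Proof.
move=> cf; rewrite -[X in open X]/(f @^-1` [set z | y < z]).
by apply: open_comp => [x _|]; [exact: cf|exact: open_gt].
Qed.

Lemma open_lt_comp (R : realType) (T : topologicalType) (f : T -> R) y :
  continuous f -> open [set x | f x < y].
Proof.
move=> cf; rewrite -[X in open X]/(f @^-1` [set z | z < y]).
by apply: open_comp => [x _|]; [exact: cf|exact: open_lt].
Qed.

Section EssentialGraph.
Variables (R : realType) (n : nat) (phi : complex R -> 'M[R]_(n + n)).
Local Notation M := 'M[R]_(n + n).

(* Every neighbourhood of a point of the essential graph meets the graph over a set of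
   positive measure, hence over any set of full measure. *)
Lemma ess_graph_ge x L (O : set (R * R)) (P : R -> Prop) (g : M -> R) c :
  ess_graph phi x L -> open O -> O (Defs.coord x) ->
  {ae @lebesgue_measure R, forall t, P t} -> continuous g ->
  (forall t, O (circ2 t) -> P t -> c <= g (phi (circ t))) -> c <= g L.
Proof.
move=> xL oO Ox [N [mN N0 notPN]] cg g_ge; rewrite leNgt; apply/negP => gL_lt.
have /xL : nbhs (Defs.coord x, L) (O `*` [set Q | g Q < c]).
  exists (O, [set Q | g Q < c]) => //=.
  by split; apply: open_nbhs_nbhs; split => //; exact: open_lt_comp.
have /le_lebesgue_measure :
    [set t | (O `*` [set Q | g Q < c]) (circ2 t, phi (circ t))] `<=` N.
  move=> t /= [Ot gt_lt]; apply: notPN => Pt.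
  by have := g_ge t Ot Pt; rewrite leNgt gt_lt.
by rewrite N0 => /[swap] /lt_le_trans/[apply]; rewrite ltxx.
Qed.

Lemma ess_graph_eq x L (g : M -> R) c : ess_graph phi x L ->
  continuous g -> (forall t, g (phi (circ t)) = c) -> g L = c.
Proof.
move=> xL cg gc; have ae_true : {ae @lebesgue_measure R, forall t : R, True} by exact: aeW.
apply/eqP; rewrite eq_le -lerN2; apply/andP; split.
- apply: (ess_graph_ge (g := fun P => - g P) xL openT I ae_true) => [P|t _ _].
    exact: continuousN (cg P).
  by rewrite gc.
- by apply: (ess_graph_ge xL openT I ae_true cg) => t _ _; rewrite gc.
Qed.

Lemma ess_graph_mx_eq0 p q x L (F : M -> 'M[R]_(p, q)) : ess_graph phi x L ->
  mx_continuous F -> (forall t, F (phi (circ t)) = 0) -> F L = 0.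
Proof.
move=> xL cF F0; apply/matrixP => i j; rewrite mxE.
by apply: (ess_graph_eq (g := fun P => F P i j) xL (cF i j)) => t; rewrite F0 mxE.
Qed.

Lemma ess_graph_circle x L : ess_graph phi x L -> cnorm2 x = 1.
Proof.
move=> xL; apply: contrapT => x_off.
pose h (p : R * R) := p.1 ^+ 2 + p.2 ^+ 2 - 1.
have ch : continuous h.
  by move=> p; apply: cvgB; [apply: cvgD; apply: cvgM|exact: cvg_cst];
    (exact: cvg_fst || exact: cvg_snd).
have h_circ t : h (circ2 t) = 0 by rewrite /h /circ2 /= cos2Dsin2 subrr.
have ae_true : {ae @lebesgue_measure R, forall t : R, True} by exact: aeW.
suff : (0 : R) <= -1 by rewrite ler0N1.
have [h_lt0|h_gt0|/eqP] := ltgtP (h (Defs.coord x)) 0.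
- apply: (ess_graph_ge (g := fun _ => -1) xL (open_lt_comp 0 ch) h_lt0 ae_true) => [|t].
    exact: cst_continuous.
  by rewrite /= h_circ ltxx.
- apply: (ess_graph_ge (g := fun _ => -1) xL (open_gt_comp 0 ch) h_gt0 ae_true) => [|t].
    exact: cst_continuous.
  by rewrite /= h_circ ltxx.
- by rewrite /h subr_eq0 => /eqP.
Qed.

Lemma ess_graph_lagrangian x L :
  (forall t, lagrangian (phi (circ t))) -> ess_graph phi x L -> lagrangian L.
Proof.
move=> lag_phi xL; have cid : mx_continuous (fun P : M => P) by exact: mx_continuous_id.
have LT : L^T = L.
  apply/eqP; rewrite -subr_eq0; apply/eqP.
  apply: (ess_graph_mx_eq0 (F := fun P => P^T - P) xL).
    by apply: mx_continuousD; [exact: mx_continuous_tr|exact: mx_continuousN].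
  by move=> t; case: (lag_phi t) => -> _ _ _; rewrite subrr.
have LL : L *m L = L.
  apply/eqP; rewrite -subr_eq0; apply/eqP.
  apply: (ess_graph_mx_eq0 (F := fun P => P *m P - P) xL).
    by apply: mx_continuousD; [exact: mx_continuousM|exact: mx_continuousN].
  by move=> t; case: (lag_phi t) => _ -> _ _; rewrite subrr.
have LJL : L *m @Jmx R n *m L^T = 0.
  apply: (ess_graph_mx_eq0 (F := fun P => P *m @Jmx R n *m P^T) xL).
    apply: mx_continuousM; last exact: mx_continuous_tr.
    by apply: mx_continuousM => //; exact: mx_continuous_cst.
  by move=> t; case: (lag_phi t).
have trL : \tr L = n%:R.
  apply: (ess_graph_eq (g := fun P => \tr P) xL).
    by apply: continuous_big => [|i _]; [exact: add_continuous|exact: coord_continuous].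
  by move=> t; case: (lag_phi t) => _ PP rkP _; rewrite mxtrace_idempotent // rkP.
by split => //; apply/eqP; rewrite -(eqr_nat R) -mxtrace_idempotent // trL.
Qed.

End EssentialGraph.

(** * Chords of the circle *)

Section CircleChords.
Variable R : realType.

Lemma unit_circle_angle (c s : R) : c ^+ 2 + s ^+ 2 = 1 ->
  exists th, cos th = c /\ sin th = s.
Proof.
move=> cs1; have c_itv : -1 <= c <= 1.
  have : c ^+ 2 <= 1 by rewrite -cs1 lerDl sqr_ge0.
  by move=> c2_le1; apply/andP; split; nra.
have sE : Num.sqrt (1 - c ^+ 2) = `|s| by rewrite -cs1 addrC addKr sqrtr_sqr.
have [s_ge0|s_lt0] := leP 0 s.
- by exists (acos c); rewrite acosK ?inE // sin_acos // sE ger0_norm.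
- exists (- acos c); rewrite cosN sinN acosK ?inE // sin_acos // sE ltr0_norm //.
  by rewrite opprK.
Qed.

(* Twice the signed area of the triangle (circ a, circ b, p): its sign tells on which side
   of the chord from circ a to circ b the point p lies. *)
Definition chord_area (a b : R) (p : R * R) : R :=
  (cos b - cos a) * (p.2 - sin a) - (sin b - sin a) * (p.1 - cos a).

(* The diameter orthogonal to x2 - x1 separates x1 from x2. *)
Lemma separating_chord (x1 x2 : complex R) :
  cnorm2 x1 = 1 -> cnorm2 x2 = 1 -> x1 <> x2 ->
  exists a b, 0 < chord_area a b (Defs.coord x1) /\ chord_area a b (Defs.coord x2) < 0.
Proof.
case: x1 => p1 q1; case: x2 => p2 q2; rewrite /cnorm2 /= => x1_unit x2_unit x12.
set d1 := p2 - p1; set d2 := q2 - q1.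
have d_gt0 : 0 < d1 ^+ 2 + d2 ^+ 2.
  rewrite lt0r addr_ge0 ?sqr_ge0 // andbT paddr_eq0 ?sqr_ge0 // !sqrf_eq0.
  apply/negP => /andP[/eqP d1_0 /eqP d2_0]; apply: x12.
  by congr Complex; apply/eqP; rewrite eq_sym -subr_eq0; apply/eqP.
set r := Num.sqrt (d1 ^+ 2 + d2 ^+ 2).
have r_gt0 : 0 < r by rewrite sqrtr_gt0.
have [th [cos_th sin_th]] : exists th, cos th = - d2 / r /\ sin th = d1 / r.
  apply: unit_circle_angle; rewrite !expr_div_n sqrrN -mulrDl addrC.
  by rewrite sqr_sqrtr ?ltW // divff // gt_eqF.
have dot_lt1 : 0 < 1 - (p1 * p2 + q1 * q2).
  have : d1 ^+ 2 + d2 ^+ 2 = 2 * (1 - (p1 * p2 + q1 * q2)).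
    by rewrite /d1 /d2; nra.
  by move=> dE; move: d_gt0; rewrite dE pmulr_rgt0.
exists (th + pi), th.
have chordE p : chord_area (th + pi) th p = - 2 * (d1 * p.1 + d2 * p.2) / r.
  by rewrite /chord_area cosD sinD cospi sinpi cos_th sin_th; field; rewrite gt_eqF.
have x1_side : d1 * p1 + d2 * q1 < 0 by rewrite /d1 /d2; nra.
have x2_side : 0 < d1 * p2 + d2 * q2 by rewrite /d1 /d2; nra.
rewrite !chordE /Defs.coord /= !mulNr oppr_gt0 oppr_lt0.
rewrite -[_ / r < 0]oppr_gt0 -mulNr -mulrN.
by split; apply: divr_gt0; rewrite // mulr_gt0 // oppr_gt0.
Qed.

Lemma beta1_circ a b t :
  beta1 (circ a) (circ b) (circ t) = sgz (chord_area a b (circ2 t)).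
Proof. by []. Qed.

Lemma chord_area_continuous a b : continuous (chord_area a b).
Proof.
move=> p; apply: cvgB; apply: cvgM; try exact: cvg_cst.
  by apply: cvgB; [exact: cvg_snd|exact: cvg_cst].
by apply: cvgB; [exact: cvg_fst|exact: cvg_cst].
Qed.

Lemma chord_area_continuous_start b p : continuous (fun a => chord_area a b p).
Proof.
move=> a; apply: cvgB; apply: cvgM; apply: cvgB;
  solve [exact: cvg_cst | exact: continuous_cos | exact: continuous_sin].
Qed.

Lemma chord_area_continuous_end a p : continuous (fun b => chord_area a b p).
Proof.
move=> b; apply: cvgB; apply: cvgM; try exact: cvg_cst;
  apply: cvgB; solve [exact: cvg_cst | exact: continuous_cos | exact: continuous_sin].
Qed.

End CircleChords.

Lemma qform_continuous (R : realType) n (A C : 'M[R]_(n + n)) (v : 'rV[R]_(n + n)) :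
  continuous (fun P : 'M[R]_(n + n) => qform A C (v *m P)).
Proof.
have cid : mx_continuous (fun P : 'M[R]_(n + n) => P) by exact: mx_continuous_id.
have cvP (B : 'M[R]_(n + n)) : mx_continuous (fun P : 'M[R]_(n + n) => v *m P *m B).
  by apply: mx_continuousM; [apply: mx_continuousM => //|]; exact: mx_continuous_cst.
apply: (mx_continuousM _ (mx_continuous_tr (cvP (proj_mx C A)))) 0 0.
by apply: mx_continuousM; [exact: cvP|exact: mx_continuous_cst].
Qed.

Section GenericChord.
Variables (R : realType) (n : nat) (phi : complex R -> 'M[R]_(n + n)).
Hypothesis lag_phi : forall t, lagrangian (phi (circ t)).

Definition maximal_ae (a b : R) := {ae @lebesgue_measure R, forall t,
  beta_n (phi (circ a)) (phi (circ b)) (phi (circ t))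
    = n%:Z * beta1 (circ a) (circ b) (circ t)}.

Lemma ess_graph_qform_ge0 a b x L u : (0 < n)%N ->
  transverse (phi (circ b)) (phi (circ a)) -> maximal_ae a b ->
  ess_graph phi x L -> 0 < chord_area a b (Defs.coord x) ->
  (u <= L)%MS -> 0 <= qform (phi (circ b)) (phi (circ a)) u.
Proof.
move=> n_gt0 tba beta_ab xL x_pos /submxP[v ->].
apply: (ess_graph_ge xL (open_gt_comp 0 (@chord_area_continuous _ a b)) x_pos beta_ab
  (@qform_continuous _ _ _ _ v)) => t t_pos beta_t.
apply: (qform_ge0 n_gt0 (lag_phi b) (lag_phi a) (lag_phi t) tba) (submxMl _ _).
by rewrite beta_t beta1_circ gtr0_sgz // mulr1.
Qed.

Lemma ess_graph_qform_le0 a b x L u : (0 < n)%N ->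
  transverse (phi (circ b)) (phi (circ a)) -> maximal_ae a b ->
  ess_graph phi x L -> chord_area a b (Defs.coord x) < 0 ->
  (u <= L)%MS -> qform (phi (circ b)) (phi (circ a)) u <= 0.
Proof.
move=> n_gt0 tba beta_ab xL x_neg /submxP[v ->]; rewrite -oppr_ge0.
apply: (ess_graph_ge (g := fun P => - qform (phi (circ b)) (phi (circ a)) (v *m P)) xL
  (open_lt_comp 0 (@chord_area_continuous _ a b)) x_neg beta_ab) => [P|t t_neg beta_t].
  exact: continuousN (@qform_continuous _ _ _ _ v P).
rewrite oppr_ge0.
apply: (qform_le0 n_gt0 (lag_phi b) (lag_phi a) (lag_phi t) tba) (submxMl _ _).
by rewrite beta_t beta1_circ ltr0_sgz // mulrN1.
Qed.

(* Fubini and the fact that null sets have empty interior let us move the endpoints of a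
   separating chord to generic ones. *)
Lemma generic_chord (L : 'M[R]_(n + n)) p q a0 b0 :
  {ae ((@lebesgue_measure R \x @lebesgue_measure R) \x @lebesgue_measure R)%E,
     forall t : R * R * R,
     beta_n (phi (circ t.1.1)) (phi (circ t.1.2)) (phi (circ t.2))
       = n%:Z * beta1 (circ t.1.1) (circ t.1.2) (circ t.2)} ->
  (forall P, lagrangian P ->
     {ae @lebesgue_measure R, forall t, transverse (phi (circ t)) P}) ->
  lagrangian L -> 0 < chord_area a0 b0 p -> chord_area a0 b0 q < 0 ->
  exists a b, [/\ 0 < chord_area a b p, chord_area a b q < 0, maximal_ae a b,
    transverse (phi (circ b)) (phi (circ a)) &
    transverse (phi (circ a)) L /\ transverse (phi (circ b)) L].
Proof.
move=> beta_phi trans_phi lL p_pos q_neg.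
have [a [[a_pos a_neg] [beta_a a_L]]] := open_ae_witness
  (openI (open_gt_comp 0 (@chord_area_continuous_start _ b0 _))
         (open_lt_comp 0 (@chord_area_continuous_start _ b0 _)))
  (conj p_pos q_neg) (aeI (ae_prod_xsection (ae_prod_xsection beta_phi)) (trans_phi _ lL)).
have [b [[b_pos b_neg] [[beta_ab b_L] b_a]]] := open_ae_witness
  (openI (open_gt_comp 0 (@chord_area_continuous_end _ a _))
         (open_lt_comp 0 (@chord_area_continuous_end _ a _)))
  (conj a_pos a_neg) (aeI (aeI beta_a (trans_phi _ lL)) (trans_phi _ (lag_phi a))).
by exists a, b.
Qed.

End GenericChord.

Unset Implicit Arguments.
Theorem lemma8p4 (R : realType) (n : nat) (G : set (complex R * complex R))
  (rho : complex R * complex R -> 'M[R]_(n + n))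
  (phi : complex R -> 'M[R]_(n + n)) :
  tf_cocompact_lattice G ->
  (forall g, G g -> symplectic (rho g)) ->
  (forall g h, G g -> G h -> rho (su_mul g h) = rho g *m rho h) ->
  (forall g, G g -> rho (su_neg g) = rho g) ->
  (forall t, lagrangian (phi (circ t))) ->
  circ_measurable phi ->
  (forall g t, G g ->
     (phi (su_act g (circ t)) == phi (circ t) *m (rho g)^T)%MS) ->
  {ae ((@lebesgue_measure R \x @lebesgue_measure R) \x @lebesgue_measure R)%E,
     forall t : R * R * R,
     beta_n (phi (circ t.1.1)) (phi (circ t.1.2)) (phi (circ t.2))
       = n%:Z * beta1 (circ t.1.1) (circ t.1.2) (circ t.2)} ->
  (forall L, lagrangian L ->
     {ae @lebesgue_measure R, forall t, transverse (phi (circ t)) L}) ->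
  forall x1 L1 x2 L2,
    ess_graph phi x1 L1 -> ess_graph phi x2 L2 -> x1 <> x2 ->
    transverse L1 L2.
Proof.
move=> _ _ _ _ lag_phi _ _ beta_phi trans_phi x1 L1 x2 L2 x1L1 x2L2 x12.
have [n0|n_gt0] := posnP n.
  by rewrite /transverse; have := rank_leq_col (L1 :&: L2)%MS; lia.
have lL1 := ess_graph_lagrangian lag_phi x1L1.
have [a0 [b0 [x1_pos x2_neg]]] :=
  separating_chord (ess_graph_circle x1L1) (ess_graph_circle x2L2) x12.
have [a [b [x1_side x2_side beta_ab tba [taL1 tbL1]]]] :=
  generic_chord lag_phi beta_phi trans_phi lL1 x1_pos x2_neg.
apply: (transverse_of_qform_signs (lag_phi b) (lag_phi a) lL1 tba
  (transverse_sym tbL1) (transverse_sym taL1)) => u uL.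
- exact: (ess_graph_qform_ge0 lag_phi n_gt0 tba beta_ab x1L1 x1_side uL).
- exact: (ess_graph_qform_le0 lag_phi n_gt0 tba beta_ab x2L2 x2_side uL).
Qed.
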